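(* In the session calculus, weak fairness of components coincides with justness: a path (starting in a network state) is WC-fair if and only if it is just.
   Context: Session calculus. Fix sets of locations $p,q,r,\dots$, labels $\lambda$ and recursion variables $X,Y$. Threads: $P ::= \mathbf{end} \mid \bigoplus_{i\in I} p_i!\lambda_i;P_i \mid \sum_{i\in I} p_i?\lambda_i;P_i \mid X \mid \mu X.P$, with $I$ finite (nonempty for $\bigoplus$) and expressions $\mu X.X$, $\mu X.\mu Y.P$ excluded. Networks: $N ::= p[\![P]\!] \mid 0 \mid N\parallel N$; in a network all locations are distinct, all threads are closed, and every location named in a send or receive is a location of $N$. Thread states additionally allow the form $\langle q!\lambda\rangle;P$ (an output already selected); network states are built from located thread states likewise, taken modulo the structural congruence $\equiv$ (associativity, commutativity of $\parallel$, $N\parallel 0\equiv N$). The transition relation is the least relation closed under $\equiv$ containing: (choice) $p[\![\bigoplus_{i\in I}p_i!\lambda_i;P_i]\!]\parallel N \xrightarrow{\tau} p[\![\langle p_k!\lambda_k\rangle;P_k]\!]\parallel N$ for $k\in I$; (unfold) $p[\![\mu X.P]\!]\parallel N\xrightarrow{\tau} p[\![P\{\mu X.P/X\}]\!]\parallel N$; (comm) $p_k[\![\langle q!\lambda_k\rangle;Q]\!]\parallel q[\![\sum_{i\in I}p_i?\lambda_i;P_i]\!]\parallel N \xrightarrow{(p_k,\lambda_k,q)} p_k[\![Q]\!]\parallel q[\![P_k]\!]\parallel N$ for $k\in I$. For a transition $t$, $\mathrm{comp}(t)$ is the single location moving in a $\tau$-transition and $\{p,q\}$ for a label $(p,\lambda,q)$;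 $t$ involves $p$ if $p\in\mathrm{comp}(t)$; $t,u$ are concurrent if $\mathrm{comp}(t)\cap\mathrm{comp}(u)=\emptyset$. A path is a network state with a maximal (infinite or ending in a state without outgoing transitions) sequence of transitions. WC: location $p$ is enabled in a state if some transition from it involves $p$; perpetually enabled on a path if enabled in all its states. A path $\pi$ is WC-fair if for every suffix $\pi'$ and every location perpetually enabled on $\pi'$, $\pi'$ contains a transition involving that location. Justness: $\pi$ is just if for every suffix of $\pi$ starting in state $s$ and every transition $t$ enabled in $s$, that suffix contains a transition $u$ not concurrent with $t$. *)

From Stdlib Require Import List Arith.
Import ListNotations.
Set Implicit Arguments.

Section Calculus.
Variables (Loc Lab : Type).

(* Recursion variables are natural numbers.
   TSel q l P is the thread state <q!l>;P (output already selected). *)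
Inductive thread : Type :=
| TEnd : thread
| TSend : list (Loc * Lab * thread) -> thread   (* (+)_{i in I} p_i!l_i;P_i *)
| TRecv : list (Loc * Lab * thread) -> thread   (* Sum_{i in I} p_i?l_i;P_i *)
| TVar : nat -> thread
| TMu : nat -> thread -> thread
| TSel : Loc -> Lab -> thread -> thread.

(* naive substitution P{R/X}; it is capture-free since R is closed *)
Fixpoint subst (X : nat) (R : thread) (P : thread) : thread :=
  let fix sb (bs : list (Loc * Lab * thread)) :=
      match bs with
      | [] => []
      | (p, l, Q) :: r => (p, l, subst X R Q) :: sb r
      end in
  match P with
  | TEnd => TEnd
  | TSend bs => TSend (sb bs)
  | TRecv bs => TRecv (sb bs)
  | TVar Y => if Nat.eqb X Y then R else TVar Y
  | TMu Y Q => if Nat.eqb X Y then TMu Y Q else TMu Y (subst X R Q)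
  | TSel q l Q => TSel q l (subst X R Q)
  end.

Fixpoint thread_ok (P : thread) : Prop :=
  let fix ok (bs : list (Loc * Lab * thread)) :=
      match bs with
      | [] => True
      | (_, _, Q) :: r => thread_ok Q /\ ok r
      end in
  match P with
  | TEnd => True
  | TSend bs => bs <> [] /\ ok bs
  | TRecv bs => ok bs
  | TVar _ => True
  | TMu X Q =>
      Q <> TVar X /\ (forall Y R, Q <> TMu Y R) /\ thread_ok Q
  | TSel _ _ _ => False
  end.

Definition tstate_ok (P : thread) : Prop :=
  thread_ok P \/ exists q l Q, P = TSel q l Q /\ thread_ok Q.

Fixpoint fv_in (B : list nat) (P : thread) : Prop :=
  let fix ok (bs : list (Loc * Lab * thread)) :=
      match bs with
      | [] => True
      | (_, _, Q) :: r => fv_in B Q /\ ok r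
      end in
  match P with
  | TEnd => True
  | TSend bs => ok bs
  | TRecv bs => ok bs
  | TVar X => In X B
  | TMu X Q => fv_in (X :: B) Q
  | TSel _ _ Q => fv_in B Q
  end.

Definition closed (P : thread) : Prop := fv_in [] P.

Fixpoint names_in (D : Loc -> Prop) (P : thread) : Prop :=
  let fix ok (bs : list (Loc * Lab * thread)) :=
      match bs with
      | [] => True
      | (p, _, Q) :: r => D p /\ names_in D Q /\ ok r
      end in
  match P with
  | TEnd => True
  | TSend bs => ok bs
  | TRecv bs => ok bs
  | TVar _ => True
  | TMu _ Q => names_in D Q
  | TSel q _ Q => D q /\ names_in D Q
  end.

(* Network states modulo structural congruence: a partial map from
   locations to thread states (locations are automatically distinct). *)
Definition nstate := Loc -> option thread.

Definition dom (N : nstate) (p : Loc) : Prop := N p <> None.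

Definition wf_nstate (N : nstate) : Prop :=
  (exists L : list Loc, forall p, dom N p -> In p L) /\
  (forall p P, N p = Some P ->
     tstate_ok P /\ closed P /\ names_in (dom N) P).

(* transition labels; a tau carries the (unique) moving location *)
Inductive act : Type :=
| ATau : Loc -> act
| AComm : Loc -> Lab -> Loc -> act.

Definition involves (p : Loc) (a : act) : Prop :=
  match a with
  | ATau q => p = q
  | AComm q _ r => p = q \/ p = r
  end.

Definition concurrent (a b : act) : Prop :=
  ~ exists p, involves p a /\ involves p b.

Inductive step : nstate -> act -> nstate -> Prop :=
| StChoice : forall (N N' : nstate) p bs q l P,
    N p = Some (TSend bs) -> In (q, l, P) bs ->
    N' p = Some (TSel q l P) ->
    (forall r, r <> p -> N' r = N r) ->
    step N (ATau p) N'
| StUnfold : forall (N N' : nstate) p X P,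
    N p = Some (TMu X P) ->
    N' p = Some (subst X (TMu X P) P) ->
    (forall r, r <> p -> N' r = N r) ->
    step N (ATau p) N'
| StComm : forall (N N' : nstate) p q l Q bs P,
    p <> q ->
    N p = Some (TSel q l Q) ->
    N q = Some (TRecv bs) -> In (p, l, P) bs ->
    N' p = Some Q -> N' q = Some P ->
    (forall r, r <> p -> r <> q -> N' r = N r) ->
    step N (AComm p l q) N'.

Definition enabled (N : nstate) (p : Loc) : Prop :=
  exists a N', step N a N' /\ involves p a.

(* A path: states pst 0, pst 1, ... and transitions pact i from pst i to
   pst (i+1); plen = None for infinite paths, Some n when the path ends
   in pst n.  Values beyond the length are irrelevant. *)
Record path : Type := { pst : nat -> nstate; pact : nat -> act; plen : option nat }.

Definition idx_state (pi : path) (i : nat) : Prop :=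
  match plen pi with None => True | Some n => i <= n end.
Definition idx_trans (pi : path) (i : nat) : Prop :=
  match plen pi with None => True | Some n => i < n end.

Definition is_path (pi : path) : Prop :=
  (forall i, idx_trans pi i -> step (pst pi i) (pact pi i) (pst pi (S i))) /\
  (forall n, plen pi = Some n -> forall a N', ~ step (pst pi n) a N').

(* suffixes are indexed by their starting state index k *)
Definition wc_fair (pi : path) : Prop :=
  forall k p, idx_state pi k ->
    (forall i, k <= i -> idx_state pi i -> enabled (pst pi i) p) ->
    exists j, k <= j /\ idx_trans pi j /\ involves p (pact pi j).

Definition just (pi : path) : Prop :=
  forall k a N', idx_state pi k -> step (pst pi k) a N' ->
    exists j, k <= j /\ idx_trans pi j /\ ~ concurrent a (pact pi j).

End Calculus.

(* A location r is idle on a path from index k when no later transition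
   involves r; an idle location keeps its thread state (frame property).

   - WC-fair => just.  If every transition after k were concurrent with an
     action a enabled at k, the locations of a would be idle, so a would stay
     enabled (a step only reads the threads of its own locations); any location
     of a is then perpetually enabled yet never involved.
   - Just => WC-fair.  Let p be perpetually enabled and idle from k; take an
     action a enabled at k involving p.  Justness forbids a state where some
     enabled action has only idle locations, and in each case we reach one:
     a tau of p is such an action; if p is the sender <q!l>;Q of a, the receiver
     q stays a receive and its thread shrinks whenever it moves, so q eventually
     becomes idle while p keeps offering its output to q; if p is the receiver,
     the sender is frozen on an output to the idle p, hence idle too. *)
From Stdlib Require Import List Arith Lia Classical ClassicalEpsilon.
Set Implicit Arguments.

Section Fairness.
Variables (Loc Lab : Type).
Implicit Types (N M : nstate Loc Lab) (a b : act Loc Lab) (pi : path Loc Lab).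

Fixpoint tsize (P : thread Loc Lab) : nat :=
  match P with
  | TSend bs | TRecv bs => S (list_sum (map (fun br => tsize (snd br)) bs))
  | TMu _ Q | TSel _ _ Q => S (tsize Q)
  | _ => 0
  end.

Lemma branch_smaller (p : Loc) (l : Lab) P bs :
  In (p, l, P) bs -> tsize P < tsize (TRecv bs).
Proof.
  simpl; induction bs as [|br bs IH]; simpl; [tauto|].
  intros [->|Hin]; simpl; [lia|]. specialize (IH Hin). lia.
Qed.

Definition loc_size N (q : Loc) : nat :=
  match N q with Some P => tsize P | None => 0 end.

Definition receiving N (q : Loc) : Prop := exists bs, N q = Some (TRecv bs).

Lemma step_frame N a N' r : step N a N' -> ~ involves r a -> N' r = N r.
Proof. intros [] Hr; simpl in Hr; auto. Qed.

Lemma selected_output_step N a N' s q l Q :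
  step N a N' -> N s = Some (TSel q l Q) -> involves s a -> a = AComm s l q.
Proof.
  intros Hst Hs Hi; destruct Hst as [| |N N' p r l' R bs P _ Hp Hr _ _ _ _];
    simpl in Hi; subst; try congruence.
  destruct Hi; subst; [|congruence]. rewrite Hp in Hs; injection Hs; intros; subst; auto.
Qed.

Lemma receive_step_shrinks N a N' q :
  step N a N' -> receiving N q -> involves q a -> loc_size N' q < loc_size N q.
Proof.
  intros Hst [bs Hq] Hi;
    destruct Hst as [| |N N' p r l R bs' P _ Hp Hr Hbr _ Hr' _];
    simpl in Hi; subst; try congruence.
  destruct Hi; subst; [congruence|].
  rewrite Hr in Hq; injection Hq; intros <-.
  unfold loc_size; rewrite Hr, Hr'; exact (branch_smaller _ _ _ _ Hbr).
Qed.

Lemma comm_step_inv N p l q N' : step N (AComm p l q) N' ->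
  exists Q, N p = Some (TSel q l Q) /\ receiving N q.
Proof. intros Hst; inversion Hst; subst; unfold receiving; eauto. Qed.

Lemma step_transfer N a N' M :
  step N a N' -> (forall r, involves r a -> M r = N r) -> exists M', step M a M'.
Proof.
  intros Hst Hagree.
  exists (fun r => if excluded_middle_informative (involves r a) then N' r else M r).
  set (M' := fun r => _).
  assert (Hin : forall r, involves r a -> M' r = N' r).
  { intros r Hr; unfold M'; destruct excluded_middle_informative; tauto. }
  assert (Hout : forall r, ~ involves r a -> M' r = M r).
  { intros r Hr; unfold M'; destruct excluded_middle_informative; tauto. }
  destruct Hst as [N N' p bs q l P Hp Hbr Hp' _ | N N' p X P Hp Hp' _
                  | N N' p q l Q bs P Hpq Hp Hq Hbr Hp' Hq' _].
  - apply (@StChoice _ _ M M' p bs q l P); auto.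
    + rewrite Hagree; simpl; auto.
    + rewrite Hin; simpl; auto.
  - apply (@StUnfold _ _ M M' p X P).
    + rewrite Hagree; simpl; auto.
    + rewrite Hin; simpl; auto.
    + intros r Hr; apply Hout; simpl; auto.
  - apply (@StComm _ _ M M' p q l Q bs P); auto.
    + rewrite Hagree; simpl; auto.
    + rewrite Hagree; simpl; auto.
    + rewrite Hin; simpl; auto.
    + rewrite Hin; simpl; auto.
    + intros r Hr Hr'; apply Hout; simpl; tauto.
Qed.

Lemma not_concurrent_shared a b :
  ~ concurrent a b -> exists r, involves r a /\ involves r b.
Proof. intros H; exact (NNPP _ H). Qed.

Lemma act_has_location a : exists r, involves r a.
Proof. destruct a; simpl; eauto. Qed.

Lemma idx_trans_state pi i : idx_trans pi i -> idx_state pi i.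
Proof. unfold idx_state, idx_trans; destruct (plen pi); auto; lia. Qed.
Lemma idx_trans_succ pi i : idx_trans pi i -> idx_state pi (S i).
Proof. unfold idx_state, idx_trans; destruct (plen pi); auto; lia. Qed.
Lemma idx_state_pred pi i : idx_state pi (S i) -> idx_trans pi i.
Proof. unfold idx_state, idx_trans; destruct (plen pi); auto; lia. Qed.

Definition idle pi (r : Loc) (k : nat) : Prop :=
  forall j, k <= j -> idx_trans pi j -> ~ involves r (pact pi j).

Definition perpetually_enabled pi (p : Loc) (k : nat) : Prop :=
  forall i, k <= i -> idx_state pi i -> enabled (pst pi i) p.

Lemma idle_later pi r k k' : k <= k' -> idle pi r k -> idle pi r k'.
Proof. intros Hk Hidle j Hj; apply Hidle; lia. Qed.

Lemma loc_invariant pi r k (P : option (thread Loc Lab) -> Prop) :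
  P (pst pi k r) ->
  (forall j, k <= j -> idx_trans pi j -> P (pst pi j r) ->
     P (pst pi (S j) r)) ->
  forall i, k <= i -> idx_state pi i -> P (pst pi i r).
Proof.
  intros Hk Hstep i Hi; induction Hi as [|i Hi IH]; auto.
  intros Hs; pose proof (idx_state_pred _ _ Hs) as Ht.
  apply Hstep; auto. apply IH, idx_trans_state, Ht.
Qed.

Lemma idle_state_constant pi r k : is_path pi -> idle pi r k ->
  forall i, k <= i -> idx_state pi i -> pst pi i r = pst pi k r.
Proof.
  intros Hp Hidle.
  apply (@loc_invariant pi r k (fun o => o = pst pi k r) eq_refl).
  intros j Hj Ht <-. apply (step_frame r (proj1 Hp j Ht)), Hidle; auto.
Qed.

Lemma sender_to_idle_is_idle pi s q l Q k : is_path pi ->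
  pst pi k s = Some (TSel q l Q) -> idle pi q k -> idle pi s k.
Proof.
  intros Hp Hs Hq.
  assert (Hblocked : forall j, k <= j -> idx_trans pi j ->
            pst pi j s = Some (TSel q l Q) -> ~ involves s (pact pi j)).
  { intros j Hj Ht Hsj Hi. apply (Hq j Hj Ht).
    rewrite (selected_output_step _ (proj1 Hp j Ht) Hsj Hi); simpl; auto. }
  assert (Hconst : forall i, k <= i -> idx_state pi i ->
            pst pi i s = Some (TSel q l Q)).
  { apply (@loc_invariant pi s k (fun o => o = Some (TSel q l Q)) Hs).
    intros j Hj Ht Hsj; rewrite (step_frame s (proj1 Hp j Ht)); auto. }
  intros j Hj Ht; apply Hblocked; auto using idx_trans_state.
Qed.

Lemma receiver_size_nonincreasing pi q k : is_path pi ->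
  (forall i, k <= i -> idx_state pi i -> receiving (pst pi i) q) ->
  forall j, k <= j -> idx_state pi j -> loc_size (pst pi j) q <= loc_size (pst pi k) q.
Proof.
  intros Hp Hrecv j Hj; induction Hj as [|j Hj IH]; auto.
  intros Hs; pose proof (idx_state_pred _ _ Hs) as Ht.
  pose proof (proj1 Hp j Ht) as Hst.
  specialize (IH (idx_trans_state _ _ Ht)).
  destruct (classic (involves q (pact pi j))) as [Hi|Hi].
  - pose proof (receive_step_shrinks Hst (Hrecv j Hj (idx_trans_state _ _ Ht)) Hi). lia.
  - unfold loc_size at 1; rewrite (step_frame _ Hst Hi). exact IH.
Qed.

Lemma receiver_eventually_idle pi q k : is_path pi -> idx_state pi k ->
  (forall i, k <= i -> idx_state pi i -> receiving (pst pi i) q) ->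
  exists k', k <= k' /\ idx_state pi k' /\ idle pi q k'.
Proof.
  intros Hp Hk Hrecv.
  remember (loc_size (pst pi k) q) as n eqn:Hn.
  revert k Hn Hk Hrecv; induction n as [n IH] using lt_wf_ind; intros k Hn Hk Hrecv.
  destruct (classic (idle pi q k)) as [Hidle|Hmoves]; [exists k; auto|].
  apply not_all_ex_not in Hmoves as [j Hmoves].
  apply imply_to_and in Hmoves as [Hj Hmoves]; apply imply_to_and in Hmoves as [Ht Hi].
  apply NNPP in Hi.
  assert (Hdrop : loc_size (pst pi (S j)) q < n).
  { pose proof (receiver_size_nonincreasing Hp Hrecv Hj (idx_trans_state _ _ Ht)).
    pose proof (receive_step_shrinks (proj1 Hp j Ht)
                  (Hrecv j Hj (idx_trans_state _ _ Ht)) Hi). lia. }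
  destruct (IH _ Hdrop (S j) eq_refl (idx_trans_succ _ _ Ht)) as [k' [Hk' Hrest]].
  - intros i Hi'; apply Hrecv; lia.
  - exists k'; split; [lia | exact Hrest].
Qed.

Lemma just_no_idle_action pi k a N' : just pi -> idx_state pi k ->
  step (pst pi k) a N' -> (forall r, involves r a -> idle pi r k) -> False.
Proof.
  intros Hjust Hk Hst Hidle.
  destruct (Hjust k a N' Hk Hst) as [j [Hj [Ht Hnc]]].
  destruct (not_concurrent_shared Hnc) as [r [Hra Hrj]].
  exact (Hidle r Hra j Hj Ht Hrj).
Qed.

Lemma enabled_sender N p q l Q : N p = Some (TSel q l Q) -> enabled N p ->
  exists N', step N (AComm p l q) N'.
Proof.
  intros Hp [a [N' [Hst Hi]]].
  rewrite (selected_output_step _ Hst Hp Hi) in Hst; eauto.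
Qed.

(* If no later transition interferes with an enabled action a, its locations are
   idle, so a stays enabled and WC-fairness forces one of them to move. *)
Lemma wc_fair_just pi : is_path pi -> wc_fair pi -> just pi.
Proof.
  intros Hp Hfair k a N' Hk Hst.
  apply NNPP; intro Hnone.
  assert (Hidle : forall r, involves r a -> idle pi r k).
  { intros r Hr j Hj Ht Hrj. apply Hnone; exists j; repeat split; auto.
    intros Hc; apply Hc; exists r; auto. }
  destruct (act_has_location a) as [p Hpa].
  assert (Hen : perpetually_enabled pi p k).
  { intros i Hi Hs.
    destruct (step_transfer (pst pi i) Hst) as [M' HM].
    - intros r Hr; apply (idle_state_constant Hp (Hidle r Hr)); auto.
    - exists a, M'; auto. }
  destruct (Hfair k p Hk Hen) as [j [Hj [Ht Hpj]]].
  exact (Hidle p Hpa j Hj Ht Hpj).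
Qed.

Lemma just_enabled_not_idle pi p k : is_path pi -> just pi -> idx_state pi k ->
  perpetually_enabled pi p k -> idle pi p k -> False.
Proof.
  intros Hp Hjust Hk Hen Hidle.
  destruct (Hen k (le_n k) Hk) as [a [N' [Hst Hpa]]].
  destruct a as [p0 | s l q]; simpl in Hpa.
  -
    subst p0; apply (just_no_idle_action Hjust Hk Hst).
    intros r Hr; simpl in Hr; subst; exact Hidle.
  - destruct (comm_step_inv Hst) as [Q [Hs _]].
    destruct Hpa as [<- | <-].
    + (* p sends to q: q eventually idle, p still offering to q *)
      assert (Hfrozen : forall i, k <= i -> idx_state pi i ->
                pst pi i p = Some (TSel q l Q)).
      { intros i Hi Hsi; rewrite (idle_state_constant Hp Hidle Hi Hsi); exact Hs. }
      assert (Hrecv : forall i, k <= i -> idx_state pi i -> receiving (pst pi i) q).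
      { intros i Hi Hsi.
        destruct (enabled_sender (Hfrozen i Hi Hsi) (Hen i Hi Hsi)) as [M' HM].
        destruct (comm_step_inv HM) as [_ [_ Hq]]; exact Hq. }
      destruct (receiver_eventually_idle Hp Hk Hrecv) as [k' [Hk' [Hk's Hq]]].
      destruct (enabled_sender (Hfrozen k' Hk' Hk's) (Hen k' Hk' Hk's)) as [M' HM].
      apply (just_no_idle_action Hjust Hk's HM).
      intros r [<- | <-]; [exact (idle_later Hk' Hidle) | exact Hq].
    + (* p receives from s, which is frozen on its output to p *)
      apply (just_no_idle_action Hjust Hk Hst).
      intros r [<- | <-]; [exact (sender_to_idle_is_idle _ Hp Hs Hidle) | exact Hidle].
Qed.

Lemma just_wc_fair pi : is_path pi -> just pi -> wc_fair pi.
Proof.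
  intros Hp Hjust k p Hk Hen.
  apply NNPP; intro Hnone.
  apply (just_enabled_not_idle Hp Hjust Hk Hen).
  intros j Hj Ht Hpj; apply Hnone; eauto.
Qed.

End Fairness.

Theorem mainTheorem5 (Loc Lab : Type) (pi : path Loc Lab) :
  is_path pi -> wf_nstate (pst pi 0) -> (wc_fair pi <-> just pi).
Proof.
  intros Hp _; split; [apply wc_fair_just | apply just_wc_fair]; auto.
Qed.
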